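(* Let $S$ be a finitely generated semigroup and let $A$ and $B$ be finite generating sets for $S$. Then $\Omega\Gamma_r(S,A)$ is isomorphic, as a partially ordered set, to $\Omega\Gamma_r(S,B)$.
   Context: A digraph on a set $\Omega$ is a subset $\Gamma\subseteq\Omega\times\Omega$. A path is a finite or infinite sequence of pairwise distinct vertices $(v_0,v_1,\ldots)$ with $(v_i,v_{i+1})\in\Gamma$ for all $i$ (a single vertex is a path of length 0); a ray is an infinite path; an anti-ray is an infinite sequence of pairwise distinct vertices with $(v_{i+1},v_i)\in\Gamma$ for all $i$. For infinite $\Sigma',\Sigma\subseteq\Omega$, write $\Sigma'\preccurlyeq\Sigma$ if there are infinitely many pairwise vertex-disjoint paths each with initial vertex in $\Sigma'$ and final vertex in $\Sigma$. Restricted to rays and anti-rays of $\Gamma$ (identified with their vertex sets), $\preccurlyeq$ is a preorder; $\mathbf{r}\approx\mathbf{r}'$ iff $\mathbf{r}\preccurlyeq\mathbf{r}'$ and $\mathbf{r}'\preccurlyeq\mathbf{r}$. The ends of $\Gamma$ are the $\approx$-classes of rays and anti-rays, and $\Omega\Gamma$ is the set of ends partially ordered by the order induced by $\preccurlyeq$. The right Cayley graph $\Gamma_r(S,A)$ is the digraph on $S$ with edges $(x,xa)$, $x\in S$, $a\in A$. *)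

From Stdlib Require Import List.
Import ListNotations.
Set Implicit Arguments.

Definition digraph (Omega : Type) := Omega -> Omega -> Prop.

Fixpoint chain {Omega : Type} (G : digraph Omega) (l : list Omega) : Prop :=
  match l with
  | x :: ((y :: _) as t) => G x y /\ chain G t
  | _ => True
  end.

Definition fin_path {Omega : Type} (G : digraph Omega) (p : list Omega) : Prop :=
  p <> [] /\ NoDup p /\ chain G p.

Definition initial {Omega : Type} (p : list Omega) (x : Omega) : Prop :=
  exists t, p = x :: t.
Definition final {Omega : Type} (p : list Omega) (x : Omega) : Prop :=
  exists t, p = t ++ [x].

Definition ray {Omega : Type} (G : digraph Omega) (r : nat -> Omega) : Prop :=
  (forall i j, r i = r j -> i = j) /\ (forall i, G (r i) (r (S i))).

Definition antiray {Omega : Type} (G : digraph Omega) (r : nat -> Omega) : Prop :=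
  (forall i j, r i = r j -> i = j) /\ (forall i, G (r (S i)) (r i)).

Definition infinite_set {Omega : Type} (X : Omega -> Prop) : Prop :=
  forall l : list Omega, exists x, X x /\ ~ In x l.

Definition reach_pre {Omega : Type} (G : digraph Omega) (Sigma' Sigma : Omega -> Prop) : Prop :=
  exists P : nat -> list Omega,
    (forall n, fin_path G (P n)
       /\ (exists x, initial (P n) x /\ Sigma' x)
       /\ (exists y, final (P n) y /\ Sigma y))
    /\ (forall n m, n <> m -> forall v, In v (P n) -> ~ In v (P m)).

Definition RA {Omega : Type} (G : digraph Omega) : Type :=
  { r : nat -> Omega | ray G r \/ antiray G r }.

Definition vset {Omega : Type} {G : digraph Omega} (r : RA G) : Omega -> Prop :=
  fun x => exists i, proj1_sig r i = x.

Definition ra_le {Omega : Type} {G : digraph Omega} (r s : RA G) : Prop :=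
  reach_pre G (vset r) (vset s).

Definition ra_equiv {Omega : Type} {G : digraph Omega} (r s : RA G) : Prop :=
  ra_le r s /\ ra_le s r.

Definition is_end {Omega : Type} {G : digraph Omega} (E : RA G -> Prop) : Prop :=
  exists r : RA G, forall s, E s <-> ra_equiv r s.

Definition End_ {Omega : Type} (G : digraph Omega) : Type :=
  { E : RA G -> Prop | is_end E }.

Definition end_le {Omega : Type} {G : digraph Omega} (E F : End_ G) : Prop :=
  exists r s, proj1_sig E r /\ proj1_sig F s /\ ra_le r s.

Definition ends_iso {O1 O2 : Type} (G1 : digraph O1) (G2 : digraph O2) : Prop :=
  exists (f : End_ G1 -> End_ G2) (g : End_ G2 -> End_ G1),
    (forall x, g (f x) = x) /\ (forall y, f (g y) = y) /\
    (forall x y, end_le x y <-> end_le (f x) (f y)).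

Definition associative {S : Type} (mul : S -> S -> S) : Prop :=
  forall x y z, mul x (mul y z) = mul (mul x y) z.

Definition generates {S : Type} (mul : S -> S -> S) (A : list S) : Prop :=
  forall s, exists a l, In a A /\ Forall (fun x => In x A) l /\ fold_left mul l a = s.

Definition cayley_r {S : Type} (mul : S -> S -> S) (A : list S) : digraph S :=
  fun x y => exists a, In a A /\ y = mul x a.

From Stdlib Require Import List Arith Lia Classical ClassicalEpsilon
  FunctionalExtensionality PropExtensionality ProofIrrelevance.
Import ListNotations.

(* [Sigma' ≼ Sigma] holds iff for every finite set [F] of vertices some walk from [Sigma'] to
   [Sigma] avoids [F].  Every generator in [A] is a nonempty word over [B] and these words have
   bounded length, so a walk in [Γ_r(S,A)] avoiding a suitable finite enlargement of [F] becomes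
   a walk in [Γ_r(S,B)] avoiding [F]: both Cayley graphs induce the same relation on vertex sets.
   This relation is transitive through the vertex set of any ray or anti-ray.  Replacing each
   edge of a ray of [Γ_r(S,A)] by its [B]-word gives a walk of [Γ_r(S,B)] visiting every vertex
   finitely often; keeping only last visits turns it into a ray equivalent to the original one
   (dually for anti-rays).  Rays and anti-rays of the two graphs thus correspond up to [≈],
   compatibly with [≼]. *)

Definition converse {O : Type} (G : digraph O) : digraph O := fun x y => G y x.

Lemma chain_app {O} (G : digraph O) l1 z l2 :
  chain G (l1 ++ z :: l2) <-> chain G (l1 ++ [z]) /\ chain G (z :: l2).
Proof.
  induction l1 as [|a l1 IH]; simpl; [tauto|].
  destruct l1 as [|b l1]; simpl in *; tauto.
Qed.

Lemma chain_rev {O} (G : digraph O) l : chain G l -> chain (converse G) (rev l).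
Proof.
  induction l as [|x [|y l] IH]; intros H; simpl; try exact I.
  destruct H as [Hxy H]. rewrite <- app_assoc. apply (chain_app (converse G)).
  split; [exact (IH H)|]. now split.
Qed.

Lemma chain_nth {O} (G : digraph O) l k d :
  chain G l -> S k < length l -> G (nth k l d) (nth (S k) l d).
Proof.
  revert k; induction l as [|x [|y l] IH]; intros k H Hk; simpl in *; try lia.
  destruct H as [Hxy H]. destruct k; [exact Hxy|].
  apply (IH k H). simpl. lia.
Qed.

Lemma chain_map_seq {O} (G : digraph O) (f : nat -> O) :
  (forall k, G (f k) (f (S k))) -> forall n a, chain G (map f (seq a n)).
Proof.
  intros Hf n; induction n as [|[|n] IH]; intros a; simpl; try exact I.
  split; [apply Hf|]. exact (IH (S a)).
Qed.

Lemma final_app {O} (m k : list O) y : k <> [] -> final (m ++ k) y <-> final k y.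
Proof.
  intros Hk. split.
  - intros [t Ht]. destruct (exists_last Hk) as [k' [u ->]].
    rewrite app_assoc in Ht. apply app_inj_tail in Ht. destruct Ht as [_ ->]. now exists k'.
  - intros [t ->]. exists (m ++ t). now rewrite app_assoc.
Qed.

Lemma chain_concat {O} (G : digraph O) l1 l2 y :
  chain G l1 -> final l1 y -> chain G l2 -> initial l2 y ->
  exists l, chain G l /\ (forall x, initial l1 x -> initial l x)
    /\ (forall z, final l2 z -> final l z) /\ (forall v, In v l -> In v l1 \/ In v l2).
Proof.
  intros H1 [t1 ->] H2 [t2 ->].
  exists (t1 ++ y :: t2). split; [now apply chain_app|]. split; [|split].
  - intros x [t Ht]. exists (t ++ t2). destruct t1 as [|a t1]; simpl in *; injection Ht as -> Ht.
    + now subst.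
    + subst. now rewrite <- app_assoc.
  - intros z Hz. now apply final_app.
  - intros v Hv. apply in_app_iff in Hv as [Hv|Hv]; [left|right; exact Hv].
    apply in_app_iff. now left.
Qed.

Lemma not_NoDup_repeat {O} (l : list O) :
  ~ NoDup l -> exists l1 z l2 l3, l = l1 ++ z :: l2 ++ z :: l3.
Proof.
  induction l as [|a l IH]; intros H.
  - exfalso. apply H. constructor.
  - destruct (classic (In a l)) as [Ha|Ha].
    + destruct (in_split _ _ Ha) as [l2 [l3 ->]]. now exists [], a, l2, l3.
    + destruct IH as [l1 [z [l2 [l3 ->]]]].
      * intros Hl. apply H. now constructor.
      * now exists (a :: l1), z, l2, l3.
Qed.

(* Cutting out the loop between two occurrences of a repeated vertex. *)
Lemma fin_path_of_chain {O} (G : digraph O) l x y :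
  chain G l -> initial l x -> final l y ->
  exists p, fin_path G p /\ initial p x /\ final p y /\ incl p l.
Proof.
  remember (length l) as n eqn:Hn. revert l Hn.
  induction n as [n IH] using lt_wf_ind; intros l Hn Hc Hx Hy.
  destruct (classic (NoDup l)) as [Hnd|Hnd].
  - exists l. repeat split; try assumption; [|apply incl_refl].
    destruct Hx as [t ->]. discriminate.
  - destruct (not_NoDup_repeat l Hnd) as [l1 [z [l2 [l3 ->]]]].
    apply chain_app in Hc as [Hc1 Hc2]. apply final_app in Hy; [|discriminate].
    change (z :: l2 ++ z :: l3) with ((z :: l2) ++ z :: l3) in Hc2, Hy.
    apply chain_app in Hc2 as [_ Hc3]. apply final_app in Hy; [|discriminate].
    destruct (IH (length (l1 ++ z :: l3))) with (l := l1 ++ z :: l3)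
      as [p [Hp [Hpx [Hpy Hpl]]]]; try reflexivity.
    + subst n. rewrite !length_app. simpl. rewrite length_app. simpl. lia.
    + now apply chain_app.
    + destruct l1 as [|a l1]; destruct Hx as [t Ht]; injection Ht as -> _; eexists; reflexivity.
    + now apply final_app.
    + exists p. split; [exact Hp|split; [exact Hpx|split; [exact Hpy|]]].
      intros a Ha. apply Hpl in Ha.
      rewrite !in_app_iff in *. simpl in *. rewrite in_app_iff. simpl. tauto.
Qed.

(* Equivalent to [reach_pre] (see [reach_pre_iff_reach_avoiding]), but walks can be
   concatenated freely. *)
Definition reach_avoiding {O : Type} (G : digraph O) (X Y : O -> Prop) : Prop :=
  forall F : list O, exists l, chain G l /\ (exists x, initial l x /\ X x)
    /\ (exists y, final l y /\ Y y) /\ (forall v, In v l -> ~ In v F).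

Lemma disjoint_family_avoids {O} (P : nat -> list O) :
  (forall n m, n <> m -> forall v, In v (P n) -> ~ In v (P m)) ->
  forall F, exists n, forall v, In v (P n) -> ~ In v F.
Proof.
  intros Hd F. enough (H : forall N, exists n, N <= n /\ forall v, In v (P n) -> ~ In v F)
    by (destruct (H 0) as [n [_ Hn]]; eauto).
  induction F as [|v0 F IH]; intros N; [exists N; auto|].
  destruct (IH N) as [n1 [Hn1 Ha1]].
  destruct (classic (In v0 (P n1))) as [Hv|Hv].
  - destruct (IH (S n1)) as [n2 [Hn2 Ha2]]. exists n2. split; [lia|].
    intros v Hv2 [<-|Hin]; [|exact (Ha2 v Hv2 Hin)].
    exact (Hd n1 n2 ltac:(lia) v0 Hv Hv2).
  - exists n1. split; [exact Hn1|]. intros v Hv1 [<-|Hin]; [contradiction|exact (Ha1 v Hv1 Hin)].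
Qed.

Lemma reach_avoiding_paths {O} (G : digraph O) X Y : reach_avoiding G X Y ->
  forall F : list O, exists p, (fin_path G p /\ (exists x, initial p x /\ X x)
    /\ (exists y, final p y /\ Y y)) /\ (forall v, In v p -> ~ In v F).
Proof.
  intros H F. destruct (H F) as [l [Hc [[x [Hx HX]] [[y [Hy HY]] Ha]]]].
  destruct (fin_path_of_chain G l x y Hc Hx Hy) as [p [Hp [Hpx [Hpy Hpl]]]].
  exists p. split; [split; [exact Hp|split; eauto]|]. intros v Hv. now apply Ha, Hpl.
Qed.

(* Pick the paths one after another, each avoiding all previous ones. *)
Lemma reach_pre_iff_reach_avoiding {O} (G : digraph O) X Y :
  reach_pre G X Y <-> reach_avoiding G X Y.
Proof.
  split.
  - intros [P [HP Hd]] F. destruct (disjoint_family_avoids P Hd F) as [n Hn].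
    destruct (HP n) as [[_ [_ Hc]] [Hx Hy]]. exists (P n). auto.
  - intros H. destruct (choice _ (reach_avoiding_paths G X Y H)) as [next Hnext].
    set (acc := fix acc n := match n with 0 => [] | S n => acc n ++ next (acc n) end).
    assert (Hacc : forall n m, n <= m -> incl (acc n) (acc m)).
    { intros n m Hnm. induction Hnm; [apply incl_refl|].
      intros a Ha. apply in_app_iff. auto. }
    assert (Hlt : forall n m, n < m -> forall v, In v (next (acc n)) -> ~ In v (next (acc m))).
    { intros n m Hnm v Hv Hv2. apply (proj2 (Hnext (acc m)) v Hv2).
      apply (Hacc (S n) m Hnm), in_app_iff. now right. }
    exists (fun n => next (acc n)). split; [intros n; apply Hnext|].
    intros n m Hnm v Hv Hv2. destruct (Nat.lt_gt_cases n m) as [[Hl|Hl] _]; [exact Hnm| |].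
    + exact (Hlt n m Hl v Hv Hv2).
    + exact (Hlt m n Hl v Hv2 Hv).
Qed.

Lemma reach_avoiding_converse {O} (G : digraph O) X Y :
  reach_avoiding (converse G) X Y -> reach_avoiding G Y X.
Proof.
  intros H F. destruct (H F) as [l [Hc [[x [[t Hx] HX]] [[y [[t' Hy] HY]] Ha]]]].
  exists (rev l). split; [|split; [|split]].
  - exact (chain_rev (converse G) l Hc).
  - exists y. split; [|exact HY]. rewrite Hy, rev_app_distr. eexists; reflexivity.
  - exists x. split; [|exact HX]. rewrite Hx. eexists; reflexivity.
  - intros v Hv. now apply Ha, in_rev.
Qed.

Lemma injective_bound {O} (r : nat -> O) : (forall i j, r i = r j -> i = j) ->
  forall l : list O, exists N, forall j, In (r j) l -> j < N.
Proof.
  intros Hr l. induction l as [|a l [N HN]]; [exists 0; intros j []|].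
  destruct (classic (exists j, r j = a)) as [[j0 <-]|Hno].
  - exists (max N (S j0)). intros j [E|Hj].
    + apply Hr in E. lia.
    + specialize (HN j Hj). lia.
  - exists N. intros j [E|Hj]; [exfalso; eauto|auto].
Qed.

Lemma segment_walk {O} (G : digraph O) (f : nat -> O) :
  (forall k, G (f k) (f (S k))) -> forall a b, a <= b ->
  let l := map f (seq a (S (b - a))) in
  chain G l /\ initial l (f a) /\ final l (f b)
  /\ (forall v, In v l -> exists m, a <= m /\ v = f m).
Proof.
  intros Hf a b Hab l. split; [apply chain_map_seq, Hf|split; [|split]].
  - eexists; reflexivity.
  - unfold l. rewrite seq_S, map_app. replace (a + (b - a)) with b by lia. eexists; reflexivity.
  - intros v Hv. apply in_map_iff in Hv as [m [<- Hm]]. apply in_seq in Hm.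
    exists m. split; [lia|reflexivity].
Qed.

(* Enter the ray beyond the part meeting [F], walk along it, and leave it further on. *)
Lemma reach_avoiding_trans_ray {O} (G : digraph O) (m : nat -> O) X Z : ray G m ->
  reach_avoiding G X (fun x => exists i, m i = x) ->
  reach_avoiding G (fun x => exists i, m i = x) Z -> reach_avoiding G X Z.
Proof.
  intros [Hinj He] H1 H2 F.
  destruct (injective_bound m Hinj F) as [N HN].
  destruct (H1 (F ++ map m (seq 0 N))) as [l1 [Hc1 [Hx1 [[y [Hy1 [i <-]]] Ha1]]]].
  assert (HiN : N <= i).
  { destruct (le_lt_dec N i) as [h|h]; [exact h|]. exfalso. apply (Ha1 (m i)).
    - destruct Hy1 as [t ->]. apply in_app_iff. right. now left.
    - apply in_app_iff. right. apply in_map. apply in_seq. lia. }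
  destruct (H2 (F ++ map m (seq 0 (S i)))) as [l2 [Hc2 [[x2 [Hx2 [j <-]]] [Hy2 Ha2]]]].
  assert (Hij : i <= j).
  { destruct (le_lt_dec i j) as [h|h]; [exact h|]. exfalso. apply (Ha2 (m j)).
    - destruct Hx2 as [t ->]. now left.
    - apply in_app_iff. right. apply in_map. apply in_seq. lia. }
  destruct (segment_walk G m He i j Hij) as [Hc3 [Hx3 [Hy3 Hv3]]].
  destruct (chain_concat G _ _ _ Hc1 Hy1 Hc3 Hx3) as [l4 [Hc4 [Hx4 [Hy4 Hv4]]]].
  destruct (chain_concat G _ _ _ Hc4 (Hy4 _ Hy3) Hc2 Hx2) as [l5 [Hc5 [Hx5 [Hy5 Hv5]]]].
  exists l5. split; [exact Hc5|split; [|split]].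
  - destruct Hx1 as [x [Hx HX]]. eauto.
  - destruct Hy2 as [z [Hz HZ]]. eauto.
  - intros v Hv HF. apply Hv5 in Hv as [Hv|Hv]; [apply Hv4 in Hv as [Hv|Hv]|].
    + apply (Ha1 v Hv). apply in_app_iff. now left.
    + destruct (Hv3 v Hv) as [k [Hk ->]]. specialize (HN k HF). lia.
    + apply (Ha2 v Hv). apply in_app_iff. now left.
Qed.

Lemma reach_avoiding_trans_RA {O} (G : digraph O) (m : RA G) X Z :
  reach_avoiding G X (vset m) -> reach_avoiding G (vset m) Z -> reach_avoiding G X Z.
Proof.
  destruct m as [m [Hm|Hm]]; unfold vset; simpl; intros H1 H2.
  - exact (reach_avoiding_trans_ray G m X Z Hm H1 H2).
  - apply reach_avoiding_converse, (reach_avoiding_trans_ray (converse G) m Z X Hm);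
      now apply (reach_avoiding_converse (converse G)).
Qed.

Lemma last_visit (P : nat -> Prop) n : (forall t, n <= t -> ~ P t) ->
  forall t0, P t0 -> exists T, t0 <= T /\ P T /\ forall t, T < t -> ~ P t.
Proof.
  induction n as [|n IH]; intros Hn t0 Ht0; [exfalso; exact (Hn t0 (Nat.le_0_l _) Ht0)|].
  destruct (classic (P n)) as [Hp|Hp].
  - exists n. split; [|split; [exact Hp|intros t Ht; apply Hn; lia]].
    destruct (le_lt_dec t0 n) as [h|h]; [exact h|exfalso; apply (Hn t0); [lia|exact Ht0]].
  - apply IH; [|exact Ht0]. intros t Ht. destruct (Nat.eq_dec t n) as [->|Hne]; [exact Hp|].
    apply Hn. lia.
Qed.

Section WalkVisitingFinitelyOften.
Variables (O : Type) (w : nat -> O).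
Hypothesis finite_visits : forall v, exists T, forall t, T <= t -> w t <> v.

Lemma eventually_avoids_list (F : list O) : exists T, forall t, T <= t -> ~ In (w t) F.
Proof.
  induction F as [|a F [T HT]]; [exists 0; intros t _ []|].
  destruct (finite_visits a) as [T' HT']. exists (max T T'). intros t Ht [E|Hin].
  - apply (HT' t); [lia|now symmetry].
  - apply (HT t); [lia|exact Hin].
Qed.

(* [tt (S k)] is the last visit of [w (S (tt k))]: the indices of a loop-erasure of [w]. *)
Lemma last_visit_indices : exists tt : nat -> nat,
  (forall k, k <= tt k) /\ (forall j k, j < k -> tt j < tt k)
  /\ (forall k, w (tt (S k)) = w (S (tt k))) /\ (forall k t, tt k < t -> w t <> w (tt k)).
Proof.
  assert (Hnx : forall t, exists T, t <= T /\ w T = w t /\ forall t', T < t' -> w t' <> w t).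
  { intros t. destruct (finite_visits (w t)) as [N HN].
    apply (last_visit (fun u => w u = w t) N); [|reflexivity]. intros u Hu E. exact (HN u Hu E). }
  destruct (choice _ Hnx) as [nx Hnxs].
  set (tt := fix tt k := match k with 0 => nx 0 | S k => nx (S (tt k)) end).
  assert (Hinc : forall k, S (tt k) <= tt (S k)) by (intros k; apply Hnxs).
  exists tt. split; [|split; [|split]].
  - induction k; [lia|]. specialize (Hinc k). lia.
  - intros j k Hjk. induction Hjk; [apply Hinc|]. specialize (Hinc m). lia.
  - intros k. apply Hnxs.
  - assert (Htt : forall k, exists p, tt k = nx p) by (intros [|k]; simpl; eauto).
    intros k t H. destruct (Htt k) as [p Hp]. rewrite Hp in *.
    destruct (Hnxs p) as [_ [-> Hlast]]. now apply Hlast.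
Qed.

Lemma ray_of_walk (K : digraph O) (R : O -> Prop) :
  (forall t, K (w t) (w (S t))) -> (forall t, exists t', t <= t' /\ R (w t')) ->
  exists s, ray K s /\ reach_avoiding K (fun x => exists i, s i = x) R
    /\ reach_avoiding K R (fun x => exists i, s i = x).
Proof.
  intros He Hh. destruct last_visit_indices as [tt [Hge [Hmono [Hnext Hlast]]]].
  exists (fun k => w (tt k)). split; [split|split].
  - intros j k E. destruct (Nat.lt_total j k) as [H|[H|H]]; [|exact H|]; exfalso.
    + exact (Hlast j (tt k) (Hmono j k H) (eq_sym E)).
    + exact (Hlast k (tt j) (Hmono k j H) E).
  - intros k. rewrite Hnext. apply He.
  - intros F. destruct (eventually_avoids_list F) as [T HT].
    destruct (Hh (tt T)) as [t' [Ht' HR]].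
    destruct (segment_walk K w He (tt T) t' Ht') as [Hc [Hx [Hy Hv]]].
    eexists. split; [exact Hc|split; [eauto|split; [eauto|]]].
    intros v Hin. destruct (Hv v Hin) as [m [Hm ->]]. apply HT. specialize (Hge T). lia.
  - intros F. destruct (eventually_avoids_list F) as [T HT].
    destruct (Hh T) as [tau [Htau HR]].
    destruct (segment_walk K w He tau (tt tau) (Hge tau)) as [Hc [Hx [Hy Hv]]].
    eexists. split; [exact Hc|split; [eauto|split; [eauto|]]].
    intros v Hin. destruct (Hv v Hin) as [m [Hm ->]]. apply HT. lia.
Qed.

End WalkVisitingFinitelyOften.

(* Position [(i, p)] in the concatenation of segments of lengths [len i]: the [p]-th
   vertex of segment [i], where position [0] is the segment's starting point. *)
Definition seg_step (len : nat -> nat) (s : nat * nat) : nat * nat :=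
  if snd s <? len (fst s) then (fst s, S (snd s)) else (S (fst s), 0).

Fixpoint seg_state (len : nat -> nat) (t : nat) : nat * nat :=
  match t with 0 => (0, 0) | S t => seg_step len (seg_state len t) end.

Lemma seg_state_snd_le len t : snd (seg_state len t) <= len (fst (seg_state len t)).
Proof.
  induction t as [|t IH]; simpl; [lia|]. unfold seg_step.
  destruct (Nat.ltb_spec (snd (seg_state len t)) (len (fst (seg_state len t)))); simpl; lia.
Qed.

Lemma seg_state_lower len M : (forall i, len i <= M) ->
  forall t, t <= fst (seg_state len t) * S M + snd (seg_state len t).
Proof.
  intros HM t. induction t as [|t IH]; simpl; [lia|]. unfold seg_step.
  pose proof (seg_state_snd_le len t).
  destruct (Nat.ltb_spec (snd (seg_state len t)) (len (fst (seg_state len t)))); simpl; [lia|].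
  specialize (HM (fst (seg_state len t))). nia.
Qed.

Lemma seg_state_next len t :
  let s := seg_state len t in seg_state len (t + S (len (fst s) - snd s)) = (S (fst s), 0).
Proof.
  intros s. remember (len (fst s) - snd s) as n eqn:Hn. subst s. revert t Hn.
  induction n as [|n IH]; intros t Hn; pose proof (seg_state_snd_le len t) as Hle.
  - rewrite Nat.add_1_r. simpl. unfold seg_step. destruct (Nat.ltb_spec (snd (seg_state len t))
      (len (fst (seg_state len t)))); [lia|reflexivity].
  - assert (Hst : seg_state len (S t) = (fst (seg_state len t), S (snd (seg_state len t)))).
    { simpl. unfold seg_step.
      destruct (Nat.ltb_spec (snd (seg_state len t)) (len (fst (seg_state len t)))); [easy|lia]. }
    replace (t + S (S n)) with (S t + S n) by lia.
    rewrite IH, Hst; [reflexivity|]. rewrite Hst. simpl. lia.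
Qed.

Lemma walk_of_segments {O} (K : digraph O) (r : nat -> O) (l : nat -> list O) (M : nat) :
  (forall i j, r i = r j -> i = j) ->
  (forall i, chain K (r i :: l i ++ [r (S i)])) ->
  (forall i, length (l i) <= M) ->
  (forall v, exists N, forall i, In v (l i) -> i <= N) ->
  exists w : nat -> O, (forall t, K (w t) (w (S t)))
    /\ (forall v, exists T, forall t, T <= t -> w t <> v)
    /\ (forall t, exists t', t <= t' /\ exists i, r i = w t').
Proof.
  intros Hinj Hch Hlen Hfin.
  set (len := fun i => length (l i)). set (st := seg_state len).
  set (w := fun t => nth (snd (st t)) (r (fst (st t)) :: l (fst (st t))) (r 0)).
  exists w. split; [|split].
  - intros t. pose proof (seg_state_snd_le len t) as Hle. unfold w, st. cbn [seg_state].
    destruct (seg_state len t) as [i p]. unfold seg_step. cbn [fst snd] in *.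
    pose proof (chain_nth K _ p (r 0) (Hch i)) as Hc.
    change (r i :: l i ++ [r (S i)]) with ((r i :: l i) ++ [r (S i)]) in Hc.
    rewrite length_app in Hc. unfold len in *.
    rewrite app_nth1 in Hc by (simpl; lia).
    destruct (Nat.ltb_spec p (length (l i))); simpl.
    + rewrite app_nth1 in Hc by (simpl; lia). apply Hc. simpl. lia.
    + replace p with (length (l i)) in * by lia.
      rewrite app_nth2, Nat.sub_diag in Hc by (simpl; lia). apply Hc. simpl. lia.
  - intros v. destruct (Hfin v) as [N1 HN1]. destruct (injective_bound r Hinj [v]) as [N2 HN2].
    (* after this time the walk is past segment [N1 + N2] *)
    exists (S ((N1 + N2) * S M + M)). intros t Ht E. unfold w in E.
    pose proof (seg_state_lower len M Hlen t) as Hlow. pose proof (seg_state_snd_le len t) as Hle.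
    fold st in Hlow, Hle. destruct (st t) as [i p]. cbn [fst snd] in *. unfold len in Hle.
    assert (Hi : i <= N1 + N2).
    { destruct p as [|p].
      - specialize (HN2 i (or_introl (eq_sym E))). lia.
      - simpl in E. assert (Hv : In v (l i)) by (rewrite <- E; apply nth_In; lia).
        specialize (HN1 i Hv). lia. }
    specialize (Hlen i). nia.
  - intros t. exists (t + S (len (fst (st t)) - snd (st t))). split; [lia|].
    exists (S (fst (st t))). unfold w, st. now rewrite seg_state_next.
Qed.

Lemma ray_of_segments {O} (K : digraph O) (r : nat -> O) (l : nat -> list O) (M : nat) :
  (forall i j, r i = r j -> i = j) ->
  (forall i, chain K (r i :: l i ++ [r (S i)])) ->
  (forall i, length (l i) <= M) ->
  (forall v, exists N, forall i, In v (l i) -> i <= N) ->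
  exists s, ray K s /\ reach_avoiding K (fun x => exists i, s i = x) (fun x => exists i, r i = x)
    /\ reach_avoiding K (fun x => exists i, r i = x) (fun x => exists i, s i = x).
Proof.
  intros Hinj Hch Hlen Hfin.
  destruct (walk_of_segments K r l M Hinj Hch Hlen Hfin) as [w [Hw [Hvis Hr]]].
  exact (ray_of_walk O w Hvis K _ Hw Hr).
Qed.

Definition gen_words {T} (mul : T -> T -> T) (A B : list T) (W : list (list T)) : Prop :=
  (forall w, In w W -> w <> [] /\ incl w B) /\
  (forall a, In a A -> exists w, In w W /\ forall u, fold_left mul w u = mul u a).

Lemma fold_left_mul_l {T} (mul : T -> T -> T) : associative mul ->
  forall l u b, fold_left mul l (mul u b) = mul u (fold_left mul l b).
Proof.
  intros Hassoc l. induction l as [|c l IH]; intros u b; simpl; [reflexivity|].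
  rewrite <- Hassoc. apply IH.
Qed.

Lemma gen_words_exist {T} (mul : T -> T -> T) (B : list T) :
  associative mul -> generates mul B -> forall A, exists W, gen_words mul A B W.
Proof.
  intros Hassoc HB A. induction A as [|a A [W [HW1 HW2]]].
  - exists []. split; [intros w []|intros a []].
  - destruct (HB a) as [b0 [l [Hb0 [Hl E]]]]. exists ((b0 :: l) :: W). split.
    + intros w [<-|Hw]; [|now apply HW1]. split; [discriminate|].
      intros b [<-|Hb]; [exact Hb0|]. rewrite Forall_forall in Hl. now apply Hl.
    + intros a' [<-|Ha'].
      * exists (b0 :: l). split; [now left|]. intros u. simpl. now rewrite fold_left_mul_l, E.
      * destruct (HW2 a' Ha') as [w [Hw Hw2]]. exists w. split; [now right|exact Hw2].
Qed.

Definition suffixes {T} (W : list (list T)) : list (list T) :=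
  flat_map (fun w => map (fun k => skipn k w) (seq 0 (S (length w)))) W.

Definition word_targets {T} (mul : T -> T -> T) (W : list (list T)) (v : T) : list T :=
  map (fun s => fold_left mul s v) (suffixes W).

Lemma in_word_targets {T} (mul : T -> T -> T) W w k v :
  In w W -> k <= length w -> In (fold_left mul (skipn k w) v) (word_targets mul W v).
Proof.
  intros Hw Hk. apply (in_map (fun s => fold_left mul s v)), in_flat_map.
  exists w. split; [exact Hw|]. apply (in_map (fun k => skipn k w)), in_seq. lia.
Qed.

Lemma word_walk {T} (mul : T -> T -> T) (B w : list T) (x : T) : w <> [] -> incl w B ->
  exists l, chain (cayley_r mul B) (x :: l ++ [fold_left mul w x]) /\ length l < length w
    /\ forall v, In v l ->
         exists k, k <= length w /\ fold_left mul (skipn k w) v = fold_left mul w x.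
Proof.
  revert x. induction w as [|b w IH]; intros x Hne HB; [easy|].
  assert (Hb : cayley_r mul B x (mul x b)) by (exists b; split; [apply HB; now left|reflexivity]).
  destruct w as [|b' w].
  - exists []. repeat split; [exact Hb|simpl; lia|intros v []].
  - destruct (IH (mul x b)) as [l [Hc [Hlen Hl]]]; [discriminate|intros c Hc; apply HB; now right|].
    exists (mul x b :: l). split; [now split|split; [simpl in *; lia|]].
    intros v [<-|Hv].
    + exists 1. simpl. split; [lia|reflexivity].
    + destruct (Hl v Hv) as [k [Hk E]]. exists (S k). simpl in *. split; [lia|exact E].
Qed.

Lemma cayley_edge_word {T} (mul : T -> T -> T) A B W x y : gen_words mul A B W ->
  cayley_r mul A x y -> exists w, In w W /\ fold_left mul w x = y.
Proof.
  intros [_ HW] [a [Ha ->]]. destruct (HW a Ha) as [w [Hw E]]. eauto.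
Qed.

(* Each [A]-edge is replaced by its [B]-word; an interior vertex [v] of that word lies in
   [F] only if the edge's endpoint lies in [word_targets mul W v]. *)
Lemma cayley_walk_transfer {T} (mul : T -> T -> T) A B W (F : list T) : gen_words mul A B W ->
  forall t x, chain (cayley_r mul A) (x :: t) ->
  (forall v, In v (x :: t) -> ~ In v (F ++ flat_map (word_targets mul W) F)) ->
  exists l, chain (cayley_r mul B) l /\ initial l x /\ (forall y, final (x :: t) y -> final l y)
    /\ forall v, In v l -> ~ In v F.
Proof.
  intros HW t. induction t as [|z t IH]; intros x Hc Ha.
  - exists [x]. split; [exact I|split; [now exists []|split; [auto|]]].
    intros v Hv HF. apply (Ha v Hv), in_app_iff. now left.
  - destruct Hc as [Hxz Hc]. destruct (cayley_edge_word mul A B W x z HW Hxz) as [w [Hw <-]].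
    destruct (proj1 HW w Hw) as [Hne HwB].
    destruct (word_walk mul B w x Hne HwB) as [l1 [Hc1 [_ Hl1]]].
    destruct (IH _ Hc) as [l2 [Hc2 [Hi2 [Hf2 Ha2]]]]; [intros v Hv; apply Ha; now right|].
    destruct (chain_concat _ _ l2 _ Hc1 (ex_intro _ (x :: l1) eq_refl) Hc2 Hi2)
      as [l [Hc3 [Hi3 [Hf3 Hv3]]]].
    exists l. split; [exact Hc3|split; [apply Hi3; eexists; reflexivity|split]].
    + intros y Hy. apply Hf3, Hf2. apply (final_app [x] (_ :: t)) in Hy; [exact Hy|discriminate].
    + intros v Hv HF. destruct (Hv3 v Hv) as [[<-|Hv']|Hv'].
      * apply (Ha x); [now left|]. apply in_app_iff. now left.
      * apply in_app_iff in Hv' as [Hv'|[<-|[]]].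
        -- destruct (Hl1 v Hv') as [k [Hk E]]. apply (Ha (fold_left mul w x)); [now right; left|].
           apply in_app_iff. right. apply in_flat_map. exists v. split; [exact HF|].
           rewrite <- E. now apply in_word_targets.
        -- apply (Ha _ (or_intror (or_introl eq_refl))). apply in_app_iff. now left.
      * exact (Ha2 v Hv' HF).
Qed.

Lemma reach_avoiding_cayley_transfer {T} (mul : T -> T -> T) A B W X Y : gen_words mul A B W ->
  reach_avoiding (cayley_r mul A) X Y -> reach_avoiding (cayley_r mul B) X Y.
Proof.
  intros HW H F.
  destruct (H (F ++ flat_map (word_targets mul W) F))
    as [l [Hc [[x [[t ->] HX]] [[y [Hy HY]] Ha]]]].
  destruct (cayley_walk_transfer mul A B W F HW t x Hc Ha) as [l' [Hc' [Hi' [Hf' Ha']]]].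
  exists l'. split; [exact Hc'|split; [eauto|split; [eauto|exact Ha']]].
Qed.

Lemma cayley_edges_as_walks {T} (mul : T -> T -> T) A B W (x y : nat -> T) :
  gen_words mul A B W -> (forall i j, y i = y j -> i = j) ->
  (forall i, cayley_r mul A (x i) (y i)) ->
  exists (l : nat -> list T) M, (forall i, chain (cayley_r mul B) (x i :: l i ++ [y i]))
    /\ (forall i, length (l i) <= M) /\ (forall v, exists N, forall i, In v (l i) -> i <= N).
Proof.
  intros HW Hinj He. set (M := list_max (map (@length T) W)).
  assert (Hl : forall i, exists l, chain (cayley_r mul B) (x i :: l ++ [y i]) /\ length l <= M
    /\ forall v, In v l -> In (y i) (word_targets mul W v)).
  { intros i. destruct (cayley_edge_word mul A B W _ _ HW (He i)) as [w [Hw <-]].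
    destruct (proj1 HW w Hw) as [Hne HwB].
    destruct (word_walk mul B w (x i) Hne HwB) as [l [Hc [Hlen Hv]]].
    exists l. split; [exact Hc|split].
    - assert (HM : Forall (fun k => k <= M) (map (@length T) W)) by (apply list_max_le; lia).
      rewrite Forall_forall in HM. specialize (HM _ (in_map _ _ _ Hw)). lia.
    - intros v Hin. destruct (Hv v Hin) as [k [Hk <-]]. now apply in_word_targets. }
  destruct (choice _ Hl) as [l Hlspec]. exists l, M. split; [|split].
  - intros i. apply Hlspec.
  - intros i. apply Hlspec.
  - intros v. destruct (injective_bound y Hinj (word_targets mul W v)) as [N HN].
    exists N. intros i Hi. apply Nat.lt_le_incl, HN, Hlspec, Hi.
Qed.

Lemma cayley_RA_correspondent {T} (mul : T -> T -> T) A B W : gen_words mul A B W ->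
  forall r : RA (cayley_r mul A), exists s : RA (cayley_r mul B),
    reach_avoiding (cayley_r mul B) (vset r) (vset s)
    /\ reach_avoiding (cayley_r mul B) (vset s) (vset r).
Proof.
  intros HW [r [[Hinj He]|[Hinj He]]]; unfold vset; simpl.
  - assert (HinjS : forall i j, r (S i) = r (S j) -> i = j) by (intros i j E; apply Hinj in E; lia).
    destruct (cayley_edges_as_walks mul A B W r (fun i => r (S i)) HW HinjS He)
      as [l [M [Hc [Hlen Hfin]]]].
    destruct (ray_of_segments _ r l M Hinj Hc Hlen Hfin) as [s [Hs [H1 H2]]].
    exists (exist _ s (or_introl Hs)). simpl. now split.
  - destruct (cayley_edges_as_walks mul A B W (fun i => r (S i)) r HW Hinj He)
      as [l [M [Hc [Hlen Hfin]]]].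
    destruct (ray_of_segments (converse (cayley_r mul B)) r (fun i => rev (l i)) M Hinj)
      as [s [Hs [H1 H2]]].
    + intros i. pose proof (chain_rev _ _ (Hc i)) as Hci. simpl in Hci.
      now rewrite rev_app_distr in Hci.
    + intros i. now rewrite length_rev.
    + intros v. destruct (Hfin v) as [N HN]. exists N. intros i Hi. now apply HN, in_rev.
    + exists (exist _ s (or_intror Hs)). simpl. split; now apply reach_avoiding_converse.
Qed.

Section EndsOfDigraph.
Context {O : Type} {G : digraph O}.

Lemma ra_le_iff (r s : RA G) : ra_le r s <-> reach_avoiding G (vset r) (vset s).
Proof. apply reach_pre_iff_reach_avoiding. Qed.

Lemma reach_avoiding_RA_refl (r : RA G) : reach_avoiding G (vset r) (vset r).
Proof.
  intros F. destruct r as [r Hr].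
  assert (Hinj : forall i j, r i = r j -> i = j) by (destruct Hr as [[H _]|[H _]]; exact H).
  destruct (injective_bound r Hinj F) as [N HN].
  exists [r N]. split; [exact I|split; [|split]].
  - exists (r N). split; [now exists []|now exists N].
  - exists (r N). split; [now exists []|now exists N].
  - intros v [<-|[]] HF. specialize (HN N HF). lia.
Qed.

Definition end_of (r : RA G) : End_ G :=
  exist (fun E => is_end E) (ra_equiv r) (ex_intro _ r (fun s => iff_refl _)).

Definition rep (E : End_ G) : RA G :=
  proj1_sig (constructive_indefinite_description _ (proj2_sig E)).

Lemma rep_spec (E : End_ G) s : proj1_sig E s <-> ra_equiv (rep E) s.
Proof. exact (proj2_sig (constructive_indefinite_description _ (proj2_sig E)) s). Qed.

Lemma End_ext (E E' : End_ G) : (forall s, proj1_sig E s <-> proj1_sig E' s) -> E = E'.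
Proof.
  destruct E as [E HE], E' as [E' HE']. simpl. intros H.
  assert (E = E') as <-.
  { apply functional_extensionality. intros s. apply propositional_extensionality, H. }
  f_equal. apply proof_irrelevance.
Qed.

Lemma end_of_rep (E : End_ G) : end_of (rep E) = E.
Proof. apply End_ext. intros s. symmetry. apply rep_spec. Qed.

Lemma end_of_eq (r s : RA G) :
  reach_avoiding G (vset r) (vset s) -> reach_avoiding G (vset s) (vset r) -> end_of r = end_of s.
Proof.
  intros Hrs Hsr. apply End_ext. intros t. simpl. unfold ra_equiv. rewrite !ra_le_iff.
  split; intros [H1 H2]; split; eapply reach_avoiding_trans_RA; eassumption.
Qed.

Lemma rep_end_of (r : RA G) :
  reach_avoiding G (vset r) (vset (rep (end_of r)))
  /\ reach_avoiding G (vset (rep (end_of r))) (vset r).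
Proof.
  assert (H : ra_equiv (rep (end_of r)) r).
  { apply rep_spec. simpl. split; apply ra_le_iff, reach_avoiding_RA_refl. }
  destruct H as [H1 H2]. rewrite ra_le_iff in H1, H2. now split.
Qed.

Lemma end_le_end_of (r s : RA G) :
  end_le (end_of r) (end_of s) <-> reach_avoiding G (vset r) (vset s).
Proof.
  split.
  - intros [r' [s' [[Hr1 Hr2] [[Hs1 Hs2] H]]]]. rewrite ra_le_iff in Hr1, Hs2, H.
    apply (reach_avoiding_trans_RA G r'); [exact Hr1|].
    now apply (reach_avoiding_trans_RA G s').
  - intros H. exists r, s. split; [|split]; try split; apply ra_le_iff;
      [apply reach_avoiding_RA_refl..|exact H].
Qed.

End EndsOfDigraph.

Section EndsOfSameReach.
Variables (O : Type) (G1 G2 : digraph O).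
Hypothesis same_reach : forall X Y, reach_avoiding G1 X Y <-> reach_avoiding G2 X Y.

Let le := reach_avoiding G1.
Let eqv X Y := le X Y /\ le Y X.

Hypothesis corr12 : forall r : RA G1, exists s : RA G2, eqv (vset r) (vset s).
Hypothesis corr21 : forall s : RA G2, exists r : RA G1, eqv (vset s) (vset r).

Lemma le_trans_RA2 (m : RA G2) X Z : le X (vset m) -> le (vset m) Z -> le X Z.
Proof.
  unfold le. rewrite !same_reach. apply reach_avoiding_trans_RA.
Qed.

Lemma eqv_trans_RA1 (m : RA G1) X Z : eqv X (vset m) -> eqv (vset m) Z -> eqv X Z.
Proof.
  intros [H1 H2] [H3 H4]. split; eapply reach_avoiding_trans_RA; eassumption.
Qed.

Lemma eqv_trans_RA2 (m : RA G2) X Z : eqv X (vset m) -> eqv (vset m) Z -> eqv X Z.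
Proof.
  intros [H1 H2] [H3 H4]. split; eapply le_trans_RA2; eassumption.
Qed.

Lemma eqv_sym X Y : eqv X Y -> eqv Y X.
Proof. now intros []. Qed.

Theorem ends_iso_of_same_reach : ends_iso G1 G2.
Proof.
  destruct (choice _ corr12) as [c12 H12]. destruct (choice _ corr21) as [c21 H21].
  assert (Hrep1 : forall r : RA G1, eqv (vset r) (vset (rep (end_of r)))) by apply rep_end_of.
  assert (Hrep2 : forall r : RA G2, eqv (vset r) (vset (rep (end_of r)))).
  { intros r. unfold eqv, le. rewrite !same_reach. apply rep_end_of. }
  exists (fun E => end_of (c12 (rep E))), (fun F => end_of (c21 (rep F))). split; [|split].
  - intros E. rewrite <- (end_of_rep E) at 2. set (x := rep (end_of (c12 (rep E)))).
    assert (H : eqv (vset (c21 x)) (vset (rep E))).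
    { apply eqv_sym, (eqv_trans_RA2 (c12 (rep E))); [apply H12|].
      apply (eqv_trans_RA2 x); [apply Hrep2|apply H21]. }
    apply end_of_eq; apply H.
  - intros F. rewrite <- (end_of_rep F) at 2. set (y := rep (end_of (c21 (rep F)))).
    assert (H : eqv (vset (c12 y)) (vset (rep F))).
    { apply eqv_sym, (eqv_trans_RA1 (c21 (rep F))); [apply H21|].
      apply (eqv_trans_RA1 y); [apply Hrep1|apply H12]. }
    apply end_of_eq; apply same_reach, H.
  - intros E F. rewrite <- (end_of_rep E) at 1. rewrite <- (end_of_rep F) at 1.
    rewrite !end_le_end_of, <- same_reach. fold le.
    destruct (H12 (rep E)) as [HE1 HE2], (H12 (rep F)) as [HF1 HF2].
    split; intros H.
    + apply (reach_avoiding_trans_RA G1 (rep E)); [exact HE2|].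
      apply (reach_avoiding_trans_RA G1 (rep F)); [exact H|exact HF1].
    + apply (le_trans_RA2 (c12 (rep E))); [exact HE1|].
      apply (le_trans_RA2 (c12 (rep F))); [exact H|exact HF2].
Qed.

End EndsOfSameReach.

Theorem mainTheorem6 (S : Type) (mul : S -> S -> S) (Hassoc : associative mul)
  (A B : list S) (HA : generates mul A) (HB : generates mul B) :
  ends_iso (cayley_r mul A) (cayley_r mul B).
Proof.
  destruct (gen_words_exist mul B Hassoc HB A) as [WAB HWAB].
  destruct (gen_words_exist mul A Hassoc HA B) as [WBA HWBA].
  assert (same_reach : forall X Y, reach_avoiding (cayley_r mul A) X Y
                                   <-> reach_avoiding (cayley_r mul B) X Y).
  { intros X Y. split; [exact (reach_avoiding_cayley_transfer mul A B WAB X Y HWAB)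
                       |exact (reach_avoiding_cayley_transfer mul B A WBA X Y HWBA)]. }
  apply ends_iso_of_same_reach; [exact same_reach|intros r..].
  - destruct (cayley_RA_correspondent mul A B WAB HWAB r) as [s Hs].
    exists s. split; apply same_reach, Hs.
  - exact (cayley_RA_correspondent mul B A WBA HWBA r).
Qed.
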